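(* Let $f,g\in\mathcal{S}$ and $\tau\in\mathbb{C}$, $\tau\ne0$. (1) If $\beta:=\beta_f(\tau)>0$, $\varepsilon\in(0,\beta)$, and there is $r_0\in(0,1)$ with $\sup_{r_0<|z|<1}|N_g(z)-N_f(z)|(1-|z|^2)<\varepsilon/|\tau|$, then $|\beta_g(\tau)-\beta_f(\tau)|\le\varepsilon$. (2) If $\beta_f(\tau)=0$, $\varepsilon>0$, and there is $r_0\in(0,1)$ with $\sup_{r_0<|z|<1}|N_g(z)-N_f(z)|(1-|z|^2)<\varepsilon/|\tau|$, then $\beta_g(\tau)\le\varepsilon$.
   Context: $\Delta$ unit disk; $\mathcal{S}$ the class of univalent $f$ on $\Delta$ with $f(0)=0,f'(0)=1$; $N_f=f''/f'$. For $\tau\in\mathbb{C}$, $[f'(z)]^\tau=\exp(\tau\log f'(z))$ with $\log f'(0)=0$, and $\beta_f(\tau)=\limsup_{r\to1^-}\frac{\log\int_{-\pi}^{\pi}|[f'(re^{i\theta})]^\tau|d\theta}{|\log(1-r)|}$. *)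

From Stdlib Require Import Reals.
From Coquelicot Require Export Coquelicot.
Open Scope R_scope.

Definition Cexp (z : C) : C := (exp (fst z) * cos (snd z), exp (fst z) * sin (snd z)).

Definition Cderiv (f : C -> C) (z l : C) : Prop :=
  is_derive (K := C_AbsRing) (V := C_NormedModule) f z l.

Definition in_disc (z : C) : Prop := Cmod z < 1.

Definition classS (f : C -> C) : Prop :=
  (forall z, in_disc z -> ex_derive (K := C_AbsRing) (V := C_NormedModule) f z) /\
  (forall z w, in_disc z -> in_disc w -> f z = f w -> z = w) /\
  f 0 = 0 /\ Cderiv f 0 1.

Definition polar (r t : R) : C := (r * cos t, r * sin t).

Definition limsup_left1 (h : R -> R) : Rbar :=
  Rbar_glb (fun s : Rbar => exists d, 0 < d < 1 /\
     s = Lub_Rbar (fun y => exists r, 1 - d < r < 1 /\ y = h r)).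

(* beta_f(tau), given the branch L = log f' on the disc with L(0)=0;
   |[f'(z)]^tau| = |exp(tau * L z)| *)
Definition beta (L : C -> C) (tau : C) : Rbar :=
  limsup_left1 (fun r =>
    ln (RInt (fun t => Cmod (Cexp (tau * L (polar r t)))) (- PI) PI)
    / Rabs (ln (1 - r))).

Definition log_deriv_data (f f1 f2 L : C -> C) : Prop :=
  (forall z, in_disc z -> Cderiv f z (f1 z)) /\
  (forall z, in_disc z -> Cderiv f1 z (f2 z)) /\
  (forall z, in_disc z -> Cderiv L z (f2 z / f1 z)) /\
  (forall z, in_disc z -> Cexp (L z) = f1 z) /\
  L 0 = 0.

Definition Npre (f1 f2 : C -> C) (z : C) : C := f2 z / f1 z.

From Stdlib Require Import Reals Lra.
From Coquelicot Require Import Coquelicot.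
Open Scope R_scope.

(* Let c < eps / |tau| bound |N_g - N_f| (1 - |z|^2) near the boundary and
   H := tau (log g' - log f').  Along each radius, the derivative of Re H is at
   most |H'| <= |tau| c / (1 - r), so Re H (r e^{it}) <= |tau| c log (1/(1-r))
   + O(1) uniformly in t.  As |[g']^tau| = |[f']^tau| exp (Re H), the quotient
   log (integral of |[g'(re^{it})]^tau|) / |log (1 - r)|, whose limsup is
   beta_g(tau), exceeds the one for f by at most |tau| c + o(1) < eps + o(1).
   Exchanging f and g gives the lower bound. *)

Lemma Cderiv_scal (F : C -> C) (tau z l : C) :
  Cderiv F z l -> Cderiv (fun w => tau * F w)%C z (tau * l)%C.
Proof.
  (* [is_derive_scal_l] does not apply: its derivatives live in
     [AbsRing_NormedModule C_AbsRing], not in [C_NormedModule]. *)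
  intros HF.
  apply (filterdiff_ext_lin _ _ _ (filterdiff_scal_r_fct tau _ _ Cmult_comm HF)).
  intros y; simpl. unfold scal; simpl. unfold mult; simpl. ring.
Qed.

Lemma Cderiv_minus (F G : C -> C) (z l m : C) :
  Cderiv F z l -> Cderiv G z m -> Cderiv (fun w => F w - G w)%C z (l - m)%C.
Proof. exact (is_derive_minus F G z l m). Qed.

Lemma Cderiv_approx (F : C -> C) (z l : C) : Cderiv F z l ->
  forall e, 0 < e -> exists d, 0 < d /\ forall w, Cmod (w - z) < d ->
    Cmod (F w - F z - l * (w - z)) <= e * Cmod (w - z).
Proof.
  intros [_ HF] e He.
  destruct (HF z (fun P HP => HP) (mkposreal e He)) as [d Hd].
  exists d; split; [apply cond_pos |].
  intros w Hw.
  replace (F w - F z - l * (w - z))%C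
    with (minus (minus (F w) (F z)) (scal (minus w z) l))
    by (unfold minus, plus, opp, scal; simpl; unfold mult; simpl; ring).
  exact (Hd w Hw).
Qed.

Lemma Re_differentiable (F : C -> C) (x y : R) (l : C) : Cderiv F (x, y) l ->
  differentiable_pt_lim (fun u v => fst (F (u, v))) x y (fst l) (- snd l).
Proof.
  intros HF eps.
  assert (He : 0 < eps / 2) by (generalize (cond_pos eps); lra).
  destruct (Cderiv_approx F (x, y) l HF _ He) as [d [Hd Happrox]].
  assert (Hd2 : 0 < d / 2) by lra.
  exists (mkposreal _ Hd2). intros u v Hu Hv; simpl in Hu, Hv.
  set (m := Rmax (Rabs (u - x)) (Rabs (v - y))).
  assert (Hm0 : 0 <= m) by (eapply Rle_trans; [apply Rabs_pos | apply Rmax_l]).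
  assert (Hsqrt2 : sqrt 2 < 2).
  { rewrite <- (sqrt_square 2) at 2 by lra. apply sqrt_lt_1; lra. }
  assert (Hwz : Cmod ((u, v) - (x, y)) <= 2 * m).
  { eapply Rle_trans; [apply Cmod_2Rmax |].
    apply Rmult_le_compat_r; [exact Hm0 | lra]. }
  assert (Hlt : Cmod ((u, v) - (x, y)) < d).
  { assert (m < d / 2) by (apply Rmax_lub_lt; lra). lra. }
  specialize (Happrox _ Hlt).
  replace (fst (F (u, v)) - fst (F (x, y)) - (fst l * (u - x) + - snd l * (v - y)))
    with (fst (F (u, v) - F (x, y) - l * ((u, v) - (x, y)))%C)
    by (destruct (F (u, v)), (F (x, y)), l; simpl; ring).
  eapply Rle_trans; [apply re_le_Cmod |].
  generalize (cond_pos eps); nra.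
Qed.

Lemma Re_curve_derive (F : C -> C) (X Y : R -> R) (s dx dy : R) (l : C) :
  Cderiv F (X s, Y s) l -> derivable_pt_lim X s dx -> derivable_pt_lim Y s dy ->
  derivable_pt_lim (fun s => fst (F (X s, Y s))) s (fst (l * (dx, dy))%C).
Proof.
  intros HF HX HY.
  replace (fst (l * (dx, dy))%C) with (fst l * dx + - snd l * dy)
    by (destruct l; simpl; ring).
  exact (derivable_pt_lim_comp_2d _ X Y s _ _ dx dy (Re_differentiable F _ _ l HF) HX HY).
Qed.

Lemma Cmod_polar (r t : R) : Cmod (polar r t) = Rabs r.
Proof.
  unfold Cmod, polar; cbn [fst snd].
  replace ((r * cos t) ^ 2 + (r * sin t) ^ 2) with (Rsqr r * (Rsqr (sin t) + Rsqr (cos t)))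
    by (unfold Rsqr; ring).
  rewrite sin2_cos2, Rmult_1_r. apply sqrt_Rsqr_abs.
Qed.

Lemma polar_in_disc (r t : R) : Rabs r < 1 -> in_disc (polar r t).
Proof. unfold in_disc. rewrite Cmod_polar. exact (fun H => H). Qed.

Lemma Re_radial_derive (F F' : C -> C) (t s : R) :
  (forall z, in_disc z -> Cderiv F z (F' z)) -> Rabs s < 1 ->
  derivable_pt_lim (fun s => fst (F (polar s t))) s (fst (F' (polar s t) * (cos t, sin t))%C).
Proof.
  intros HF Hs.
  pose proof (Re_curve_derive F (fun s => s * cos t) (fun s => s * sin t) s
    (1 * cos t) (1 * sin t) _ (HF _ (polar_in_disc s t Hs))
    (derivable_pt_lim_scal_right id s 1 (cos t) (derivable_pt_lim_id s))
    (derivable_pt_lim_scal_right id s 1 (sin t) (derivable_pt_lim_id s))) as H.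
  rewrite !Rmult_1_l in H. exact H.
Qed.

Lemma Re_circle_continuous (F F' : C -> C) (r t : R) :
  (forall z, in_disc z -> Cderiv F z (F' z)) -> Rabs r < 1 ->
  continuity_pt (fun t => fst (F (polar r t))) t.
Proof.
  intros HF Hr. apply derivable_continuous_pt.
  eexists. apply (Re_curve_derive F (fun t => r * cos t) (fun t => r * sin t)).
  - exact (HF _ (polar_in_disc r t Hr)).
  - exact (derivable_pt_lim_scal cos r t _ (derivable_pt_lim_cos t)).
  - exact (derivable_pt_lim_scal sin r t _ (derivable_pt_lim_sin t)).
Qed.

Lemma Re_mul_unit_le (w : C) (t : R) : fst (w * (cos t, sin t))%C <= Cmod w.
Proof.
  assert (Hunit : Cmod (cos t, sin t) = 1).
  { pose proof (Cmod_polar 1 t) as H. unfold polar in H.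
    rewrite !Rmult_1_l, Rabs_R1 in H. exact H. }
  eapply Rle_trans; [apply Rle_abs |]. eapply Rle_trans; [apply re_le_Cmod |].
  rewrite Cmod_mult, Hunit. lra.
Qed.

Lemma Re_radial_growth (F F' : C -> C) (c r0 rho r t : R) :
  (forall z, in_disc z -> Cderiv F z (F' z)) ->
  (forall z, r0 < Cmod z < 1 -> Cmod (F' z) * (1 - Cmod z ^ 2) <= c) ->
  0 <= r0 < rho -> rho <= r < 1 ->
  fst (F (polar r t)) <= fst (F (polar rho t)) + c * (ln (1 - rho) - ln (1 - r)).
Proof.
  intros HF Hbound Hrho Hr.
  destruct (Req_dec rho r) as [<- | Hne].
  { rewrite Rminus_diag, Rmult_0_r. lra. }
  set (G := fun s => fst (F (polar s t)) + c * ln (1 - s)).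
  set (G' := fun s => fst (F' (polar s t) * (cos t, sin t))%C - c / (1 - s)).
  assert (HG : forall s, rho <= s <= r -> derivable_pt_lim G s (G' s)).
  { intros s Hs. apply derivable_pt_lim_plus.
    - apply Re_radial_derive; [exact HF | rewrite Rabs_right; lra].
    - apply is_derive_Reals. auto_derive; [lra | field; lra]. }
  destruct (MVT_cor2 G G' rho r ltac:(lra) HG) as [x [Hmvt Hx]].
  assert (HG'x : G' x <= 0).
  { set (z := polar x t).
    assert (Hz : Cmod z = x) by (unfold z; rewrite Cmod_polar, Rabs_right; lra).
    specialize (Hbound z). rewrite Hz in Hbound. specialize (Hbound ltac:(lra)).
    assert (Hnorm : Cmod (F' z) <= c / (1 - x)).
    { apply Rmult_le_reg_r with (1 - x); [lra |].
      replace (c / (1 - x) * (1 - x)) with c by (field; lra).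
      assert (1 - x <= 1 - x ^ 2) by nra.
      eapply Rle_trans; [| exact Hbound].
      apply Rmult_le_compat_l; [apply Cmod_ge_0 | lra]. }
    generalize (Re_mul_unit_le (F' z) t). unfold G'. fold z. lra. }
  assert (G r <= G rho) by nra.
  unfold G in *. lra.
Qed.

Lemma Cmod_Cexp (w : C) : Cmod (Cexp w) = exp (fst w).
Proof.
  unfold Cmod, Cexp; cbn [fst snd].
  replace ((exp (fst w) * cos (snd w)) ^ 2 + (exp (fst w) * sin (snd w)) ^ 2)
    with (Rsqr (exp (fst w)) * (Rsqr (sin (snd w)) + Rsqr (cos (snd w))))
    by (unfold Rsqr; ring).
  rewrite sin2_cos2, Rmult_1_r. apply sqrt_Rsqr, Rlt_le, exp_pos.
Qed.

Lemma ln_RInt_exp_le (a b : R -> R) (lo hi B : R) :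
  lo < hi -> (forall t, continuity_pt a t) -> (forall t, continuity_pt b t) ->
  (forall t, lo < t < hi -> a t <= B + b t) ->
  ln (RInt (fun t => exp (a t)) lo hi) <= B + ln (RInt (fun t => exp (b t)) lo hi).
Proof.
  intros Hlohi Ha Hb Hab.
  assert (Hcont : forall f, (forall t, continuity_pt f t) ->
    forall t, continuous (fun t => exp (f t)) t).
  { intros f Hf t. apply continuity_pt_filterlim.
    apply (continuity_pt_comp f exp); [apply Hf |].
    apply derivable_continuous_pt, derivable_pt_exp. }
  assert (Hex : forall f, (forall t, continuity_pt f t) ->
    ex_RInt (fun t => exp (f t)) lo hi).
  { intros f Hf. apply (@ex_RInt_continuous R_CompleteNormedModule).
    intros t _. apply Hcont, Hf. }
  assert (Hpos : forall f, (forall t, continuity_pt f t) ->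
    0 < RInt (fun t => exp (f t)) lo hi).
  { intros f Hf. apply RInt_gt_0; [exact Hlohi | intros; apply exp_pos |].
    intros t _. apply Hcont, Hf. }
  assert (Hint : RInt (fun t => exp (a t)) lo hi
                 <= exp B * RInt (fun t => exp (b t)) lo hi).
  { rewrite <- (RInt_scal (V := R_CompleteNormedModule)) by apply Hex, Hb.
    apply RInt_le; [lra | apply Hex, Ha | |].
    - apply (ex_RInt_scal (V := R_CompleteNormedModule)), Hex, Hb.
    - intros t Ht. unfold scal; simpl; unfold mult; simpl.
      rewrite <- exp_plus.
      destruct (Rle_lt_or_eq_dec _ _ (Hab t Ht)) as [Hlt | ->];
        [left; apply exp_increasing, Hlt | right; reflexivity]. }
  rewrite <- (ln_exp B) at 1. rewrite <- ln_mult by (apply exp_pos || apply Hpos, Hb).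
  apply ln_le; [apply Hpos, Ha | exact Hint].
Qed.

Definition beta_ratio (L : C -> C) (tau : C) (r : R) : R :=
  ln (RInt (fun t => Cmod (Cexp (tau * L (polar r t)))) (- PI) PI) / Rabs (ln (1 - r)).

Lemma beta_ratio_exp (L : C -> C) (tau : C) (r : R) :
  beta_ratio L tau r
  = ln (RInt (fun t => exp (fst (tau * L (polar r t))%C)) (- PI) PI) / Rabs (ln (1 - r)).
Proof.
  unfold beta_ratio. do 2 f_equal. apply RInt_ext. intros t _. apply Cmod_Cexp.
Qed.

Lemma Re_scaled_circle_continuous (L D : C -> C) (tau : C) (r t : R) :
  (forall z, in_disc z -> Cderiv L z (D z)) -> Rabs r < 1 ->
  continuity_pt (fun t => fst (tau * L (polar r t))%C) t.
Proof.
  intros HL Hr.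
  apply (Re_circle_continuous (fun w => tau * L w)%C (fun w => tau * D w)%C); [| exact Hr].
  intros z Hz. apply Cderiv_scal, HL, Hz.
Qed.

Lemma Re_scaled_diff_le (L1 L2 D1 D2 : C -> C) (tau : C) (c r0 : R) :
  (forall z, in_disc z -> Cderiv L1 z (D1 z)) ->
  (forall z, in_disc z -> Cderiv L2 z (D2 z)) ->
  (forall z, r0 < Cmod z < 1 -> Cmod (D2 z - D1 z) * (1 - Cmod z ^ 2) <= c) ->
  0 <= r0 < 1 ->
  exists rho A, r0 < rho < 1 /\ forall r t, rho <= r < 1 -> - PI <= t <= PI ->
    fst (tau * L2 (polar r t))%C
    <= fst (tau * L1 (polar r t))%C + A - Cmod tau * c * ln (1 - r).
Proof.
  intros H1 H2 Hbound Hr0.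
  set (H := fun w => (tau * (L2 w - L1 w))%C).
  set (K := Cmod tau * c).
  assert (HH : forall z, in_disc z -> Cderiv H z (tau * (D2 z - D1 z))%C).
  { intros z Hz. apply Cderiv_scal, Cderiv_minus; auto. }
  assert (HHbound : forall z, r0 < Cmod z < 1 ->
    Cmod (tau * (D2 z - D1 z))%C * (1 - Cmod z ^ 2) <= K).
  { intros z Hz. rewrite Cmod_mult, Rmult_assoc.
    apply Rmult_le_compat_l; [apply Cmod_ge_0 | auto]. }
  set (rho := (r0 + 1) / 2).
  assert (Hrho : r0 < rho < 1) by (unfold rho; lra).
  assert (Hrho_abs : Rabs rho < 1) by (rewrite Rabs_right; lra).
  destruct (continuity_ab_maj (fun t => fst (H (polar rho t))) (- PI) PI)
    as [tmax [Hmax _]].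
  { generalize PI_RGT_0; lra. }
  { intros t _. exact (Re_circle_continuous _ _ _ _ HH Hrho_abs). }
  exists rho, (fst (H (polar rho tmax)) + K * ln (1 - rho)).
  split; [exact Hrho |].
  intros r t Hr Ht.
  assert (Hsplit : fst (tau * L2 (polar r t))%C
                   = fst (tau * L1 (polar r t))%C + fst (H (polar r t))).
  { unfold H. destruct tau, (L1 (polar r t)), (L2 (polar r t)); simpl; ring. }
  pose proof (Re_radial_growth H _ K r0 rho r t HH HHbound ltac:(lra) ltac:(lra)).
  pose proof (Hmax t Ht).
  lra.
Qed.

Lemma beta_ratio_le (L1 L2 D1 D2 : C -> C) (tau : C) (c r0 : R) :
  (forall z, in_disc z -> Cderiv L1 z (D1 z)) ->
  (forall z, in_disc z -> Cderiv L2 z (D2 z)) ->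
  (forall z, r0 < Cmod z < 1 -> Cmod (D2 z - D1 z) * (1 - Cmod z ^ 2) <= c) ->
  0 <= r0 < 1 ->
  exists rho A, r0 < rho < 1 /\ forall r, rho <= r < 1 ->
    beta_ratio L2 tau r <= beta_ratio L1 tau r + Cmod tau * c + A / Rabs (ln (1 - r)).
Proof.
  intros H1 H2 Hbound Hr0.
  destruct (Re_scaled_diff_le L1 L2 D1 D2 tau c r0 H1 H2 Hbound Hr0)
    as [rho [A [Hrho Hdiff]]].
  exists rho, A. split; [exact Hrho |].
  intros r Hr.
  assert (Hr_abs : Rabs r < 1) by (rewrite Rabs_right; lra).
  assert (Hlog : ln (1 - r) < 0) by (rewrite <- ln_1; apply ln_increasing; lra).
  set (K := Cmod tau * c) in *.
  set (I1 := ln (RInt (fun t => exp (fst (tau * L1 (polar r t))%C)) (- PI) PI)).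
  assert (Hint : ln (RInt (fun t => exp (fst (tau * L2 (polar r t))%C)) (- PI) PI)
                 <= (A - K * ln (1 - r)) + I1).
  { apply ln_RInt_exp_le.
    - generalize PI_RGT_0; lra.
    - intros t. exact (Re_scaled_circle_continuous L2 D2 tau r t H2 Hr_abs).
    - intros t. exact (Re_scaled_circle_continuous L1 D1 tau r t H1 Hr_abs).
    - intros t Ht. specialize (Hdiff r t Hr ltac:(lra)). lra. }
  rewrite !beta_ratio_exp, Rabs_left by exact Hlog. fold I1.
  set (X := - ln (1 - r)) in *.
  replace (I1 / X + K + A / X) with ((I1 + A + K * X) / X) by (unfold X; field; lra).
  apply Rmult_le_compat_r; [left; apply Rinv_0_lt_compat; unfold X; lra |].
  unfold X. lra.
Qed.

Definition sup_near1 (h : R -> R) (d : R) : Rbar :=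
  Lub_Rbar (fun y => exists r, 1 - d < r < 1 /\ y = h r).

Lemma sup_near1_ub (h : R -> R) (d r : R) : 1 - d < r < 1 -> Rbar_le (h r) (sup_near1 h d).
Proof. intros Hr. apply (proj1 (Lub_Rbar_correct _)). exists r; auto. Qed.

Lemma sup_near1_mono (h : R -> R) (d d' : R) :
  d <= d' -> Rbar_le (sup_near1 h d) (sup_near1 h d').
Proof.
  intros Hd. apply (proj2 (Lub_Rbar_correct _)).
  intros y [r [Hr ->]]. apply sup_near1_ub. lra.
Qed.

Lemma Rbar_glb_correct (E : Rbar -> Prop) : Rbar_is_glb E (Rbar_glb E).
Proof. unfold Rbar_glb. destruct (Rbar_ex_glb E) as [l Hl]. exact Hl. Qed.

Lemma Rbar_le_minus_plus (x y : Rbar) (e : R) :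
  Rbar_le (Rbar_minus x e) y <-> Rbar_le x (Rbar_plus y e).
Proof. destruct x, y; simpl; split; auto; lra. Qed.

Lemma limsup_left1_le_plus (h1 h2 : R -> R) (e d0 : R) : 0 < d0 < 1 ->
  (forall r, 1 - d0 < r < 1 -> h2 r <= h1 r + e) ->
  Rbar_le (limsup_left1 h2) (Rbar_plus (limsup_left1 h1) e).
Proof.
  intros Hd0 Hh.
  assert (Hsup : forall d, 0 < d <= d0 ->
    Rbar_le (sup_near1 h2 d) (Rbar_plus (sup_near1 h1 d) e)).
  { intros d Hd. apply (proj2 (Lub_Rbar_correct _)).
    intros y [r [Hr ->]].
    pose proof (sup_near1_ub h1 d r Hr) as Hub.
    specialize (Hh r ltac:(lra)).
    destruct (sup_near1 h1 d); simpl in *; auto; lra. }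
  apply Rbar_le_minus_plus, (proj2 (Rbar_glb_correct _)).
  intros x [d [Hd ->]]. apply Rbar_le_minus_plus.
  set (d' := Rmin d d0).
  assert (Hd' : 0 < d' <= d0 /\ d' <= d).
  { unfold d'. repeat split; [apply Rmin_glb_lt; lra | apply Rmin_r | apply Rmin_l]. }
  eapply Rbar_le_trans.
  { apply (proj1 (Rbar_glb_correct _)). exists d'. split; [lra | reflexivity]. }
  eapply Rbar_le_trans; [apply Hsup; lra |].
  apply Rbar_plus_le_compat; [apply sup_near1_mono; lra | apply Rbar_le_refl].
Qed.

Lemma div_abs_ln_eventually_le (A e : R) : 0 < e ->
  exists d0, 0 < d0 < 1 /\ forall r, 1 - d0 < r < 1 -> A / Rabs (ln (1 - r)) <= e.
Proof.
  intros He.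
  set (T := Rabs A / e).
  assert (HT : 0 <= T) by (apply Rdiv_le_0_compat; [apply Rabs_pos | lra]).
  exists (Rmin (1 / 2) (exp (- T))). split.
  { split; [apply Rmin_glb_lt; [lra | apply exp_pos] |].
    eapply Rle_lt_trans; [apply Rmin_l | lra]. }
  intros r Hr.
  assert (Hlog : ln (1 - r) < - T).
  { rewrite <- (ln_exp (- T)). apply ln_increasing; [lra |].
    pose proof (Rmin_r (1 / 2) (exp (- T))). lra. }
  rewrite Rabs_left by lra.
  apply Rmult_le_reg_r with (- ln (1 - r)); [lra |].
  replace (A / - ln (1 - r) * - ln (1 - r)) with A by (field; lra).
  assert (Rabs A = T * e) by (unfold T; field; lra).
  pose proof (Rle_abs A). nra.
Qed.

Lemma beta_le_plus (L1 L2 D1 D2 : C -> C) (tau : C) (eps r0 c : R) :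
  (forall z, in_disc z -> Cderiv L1 z (D1 z)) ->
  (forall z, in_disc z -> Cderiv L2 z (D2 z)) ->
  (forall z, r0 < Cmod z < 1 -> Cmod (D2 z - D1 z) * (1 - Cmod z ^ 2) <= c) ->
  c < eps / Cmod tau -> tau <> 0 -> 0 <= r0 < 1 ->
  Rbar_le (beta L2 tau) (Rbar_plus (beta L1 tau) eps).
Proof.
  intros H1 H2 Hbound Hc Htau Hr0.
  assert (HK : Cmod tau * c < eps).
  { apply Cmod_gt_0 in Htau.
    apply Rmult_lt_compat_l with (r := Cmod tau) in Hc; [| exact Htau].
    replace (Cmod tau * (eps / Cmod tau)) with eps in Hc by (field; lra). exact Hc. }
  destruct (beta_ratio_le L1 L2 D1 D2 tau c r0 H1 H2 Hbound Hr0) as [rho [A [Hrho Hratio]]].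
  destruct (div_abs_ln_eventually_le A (eps - Cmod tau * c)) as [d1 [Hd1 HA]]; [lra |].
  apply (limsup_left1_le_plus (beta_ratio L1 tau) (beta_ratio L2 tau) eps (Rmin d1 (1 - rho))).
  - split; [apply Rmin_glb_lt; lra |].
    eapply Rle_lt_trans; [apply Rmin_l | lra].
  - intros r Hr.
    pose proof (Rmin_l d1 (1 - rho)). pose proof (Rmin_r d1 (1 - rho)).
    specialize (Hratio r ltac:(lra)). specialize (HA r ltac:(lra)). lra.
Qed.

Theorem mainTheorem11
  (f g f1 f2 g1 g2 Lf Lg : C -> C) (tau : C)
  (hf : classS f) (hg : classS g)
  (hfd : log_deriv_data f f1 f2 Lf) (hgd : log_deriv_data g g1 g2 Lg)
  (htau : tau <> 0) :
  (forall eps r0 : R,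
     Rbar_lt 0 (beta Lf tau) -> 0 < eps -> Rbar_lt eps (beta Lf tau) ->
     0 < r0 < 1 ->
     (exists c, c < eps / Cmod tau /\
        forall z, r0 < Cmod z < 1 ->
          Cmod (Npre g1 g2 z - Npre f1 f2 z) * (1 - Cmod z ^ 2) <= c) ->
     Rbar_le (Rbar_minus (beta Lf tau) eps) (beta Lg tau) /\
     Rbar_le (beta Lg tau) (Rbar_plus (beta Lf tau) eps)) /\
  (forall eps r0 : R,
     beta Lf tau = Finite 0 -> 0 < eps -> 0 < r0 < 1 ->
     (exists c, c < eps / Cmod tau /\
        forall z, r0 < Cmod z < 1 ->
          Cmod (Npre g1 g2 z - Npre f1 f2 z) * (1 - Cmod z ^ 2) <= c) ->
     Rbar_le (beta Lg tau) eps).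
Proof.
  destruct hfd as (_ & _ & HLf & _). destruct hgd as (_ & _ & HLg & _).
  split.
  - intros eps r0 _ _ _ Hr0 [c [Hc Hbound]]. split.
    + apply Rbar_le_minus_plus.
      apply (beta_le_plus Lg Lf (Npre g1 g2) (Npre f1 f2) tau eps r0 c HLg HLf);
        [| exact Hc | exact htau | lra].
      intros z Hz. rewrite <- Cmod_opp, Copp_minus_distr. exact (Hbound z Hz).
    + exact (beta_le_plus Lf Lg (Npre f1 f2) (Npre g1 g2) tau eps r0 c
               HLf HLg Hbound Hc htau ltac:(lra)).
  - intros eps r0 Hzero _ Hr0 [c [Hc Hbound]].
    pose proof (beta_le_plus Lf Lg (Npre f1 f2) (Npre g1 g2) tau eps r0 c
                  HLf HLg Hbound Hc htau ltac:(lra)) as H.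
    rewrite Hzero in H. simpl in H. rewrite Rplus_0_l in H. exact H.
Qed.
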